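(* Let $n\ge 2$, $\rho>0$, $\varepsilon\in[0,1]$, and let $F_1,\dots,F_n$ be continuous distributions on $\mathbb{R}$, each with a monotone density. For any joint distribution of channel gains $(|h_1|^2,\dots,|h_n|^2)$ with $|h_i|^2\sim F_i$ for each $i$, the $\varepsilon$-outage capacity $R^{\varepsilon}$ satisfies $$\log_2\bigl(1-\rho\,\Phi_{-}(1-\varepsilon)\bigr)\le R^{\varepsilon}\le\log_2\bigl(1+\rho\,\Phi(\varepsilon)\bigr).$$
   Context: $R^{\varepsilon}=\sup\{R\ge0:\Pr(\sum_{i=1}^n|h_i|^2<(2^R-1)/\rho)<\varepsilon\}$. With $G_i=F_i^{-1}$ and $X_i\sim F_i$, define $\Phi(a)=\sum_{i=1}^n\mathbb{E}[X_i\mid X_i\ge G_i(a)]$. The function $\Phi_{-}$ is $\Phi$ computed for the random variables $-X_i$, i.e. $\Phi_{-}(a)=\sum_{i=1}^n\mathbb{E}[-X_i\mid -X_i\ge G_{i,-}(a)]$ where $G_{i,-}(x)=-G_i(1-x)$ is the quantile function of $-X_i$. *)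

From HB Require Import structures.
From mathcomp Require Import all_boot all_order all_algebra.
From mathcomp Require Import all_classical all_reals all_analysis.
Set Implicit Arguments. Unset Strict Implicit. Unset Printing Implicit Defensive.
Import Order.TTheory GRing.Theory Num.Theory.
Import numFieldNormedType.Exports.
Local Open Scope classical_set_scope.
Local Open Scope ring_scope.

Section Defs.
Context {d : measure_display} {T : measurableType d} {R : realType}.
Variable P : probability T R.

Definition log2 (x : R) : R := ln x / ln 2.

Definition elog2 (x : \bar R) : \bar R :=
  match x with
  | EFin r => (log2 r)%:E
  | +oo%E => +oo%E
  | -oo%E => -oo%E
  end.

Definition is_density (Y : {RV P >-> R}) (f : R -> R) : Prop :=
  [/\ (forall x, 0 <= f x), measurable_fun [set: R] f &
      forall A : set R, measurable A ->
        P (Y @^-1` A) = (\int[lebesgue_measure]_(x in A) (f x)%:E)%E].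

Definition monotone_density (f : R -> R) : Prop :=
  exists I : interval R,
    (forall x, x \notin I -> f x = 0) /\
    ((forall x y, x \in I -> y \in I -> x <= y -> f x <= f y) \/
     (forall x y, x \in I -> y \in I -> x <= y -> f y <= f x)).

Definition quantile (Y : {RV P >-> R}) (a : R) : R :=
  inf [set x : R | (a%:E <= cdf Y x)%E].

Definition cond_exp_ge (Z : T -> R) (c : R) : \bar R :=
  let A := [set w | c <= Z w] in
  ((\int[P]_(w in A) (Z w)%:E) * ((fine (P A))^-1)%:E)%E.

Definition Phi (n : nat) (X : 'I_n -> {RV P >-> R}) (a : R) : \bar R :=
  (\sum_(i < n) cond_exp_ge (X i) (quantile (X i) a))%E.

(* Phi_-(a) = sum_i E[-X_i | -X_i >= G_{i,-}(a)],  G_{i,-}(x) = - G_i(1 - x) *)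
Definition Phi_minus (n : nat) (X : 'I_n -> {RV P >-> R}) (a : R) : \bar R :=
  (\sum_(i < n) cond_exp_ge (fun w => (- X i w)%R) (- quantile (X i) (1 - a))%R)%E.

Definition outage_capacity (n : nat) (X : 'I_n -> {RV P >-> R})
    (rho eps : R) : R :=
  sup [set r : R | 0 <= r /\
         (P [set w | (\sum_(i < n) X i w < (2 `^ r - 1) / rho)%R] < eps%:E)%E].

End Defs.

From HB Require Import structures.
From mathcomp Require Import all_boot all_order all_algebra.
From mathcomp Require Import all_classical all_reals all_analysis.
From mathcomp Require Import measurable_realfun lra.
Set Implicit Arguments. Unset Strict Implicit. Unset Printing Implicit Defensive.
Import Order.TTheory GRing.Theory Num.Theory.
Import numFieldNormedType.Exports.
Local Open Scope classical_set_scope.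
Local Open Scope ring_scope.

(* Write q_i = G_i(eps) and S = sum_i X_i.  Since the laws have densities,
   P(X_i <= q_i) = eps and P(X_i >= q_i) = 1 - eps.  Among all events of
   probability at least P(X_i >= q_i), the upper level set {X_i >= q_i}
   maximises the mean of X_i; among all events of probability at least
   P(X_i <= q_i), the lower level set {X_i <= q_i} minimises it.  Hence if
   P(S < t) < eps, averaging S over {S >= t} gives
   t <= sum_i E[X_i | X_i >= q_i] = Phi(eps), and if P(S < t) >= eps, averaging
   S over {S < t} gives t >= sum_i E[X_i | X_i <= q_i] = - Phi_-(1 - eps).
   A rate R >= 0 is admissible exactly when t = (2^R - 1)/rho satisfies
   P(S < t) < eps, so taking suprema yields the two bounds. *)

Section log2.
Context {R : realType}.

Lemma le_log2 (y r : R) : 0 < y -> (r <= log2 y) = (2 `^ r <= y).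
Proof.
move=> y0; rewrite /log2 ler_pdivlMr ?ln_gt0 ?ltr1n // -ln_powR.
by rewrite ler_ln ?posrE ?powR_gt0.
Qed.

Lemma lt_log2 (y r : R) : 0 < y -> (r < log2 y) = (2 `^ r < y).
Proof.
move=> y0; rewrite /log2 ltr_pdivlMr ?ln_gt0 ?ltr1n // -ln_powR.
by rewrite ltr_ln ?posrE ?powR_gt0.
Qed.

End log2.

Section integral_bounds.
Context d (T : measurableType d) (R : realType).
Implicit Types (mu : {measure set T -> \bar R}) (Y : T -> R).

Lemma measurable_ltr_set (f g : T -> R) :
  measurable_fun setT f -> measurable_fun setT g -> measurable [set w | f w < g w].
Proof.
move=> mf mg; rewrite -[X in measurable X]setTI.
exact: measurable_fun_ltr mf mg measurableT [set true] I.
Qed.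

Lemma measurable_ler_set (f g : T -> R) :
  measurable_fun setT f -> measurable_fun setT g -> measurable [set w | f w <= g w].
Proof.
move=> mf mg; rewrite -[X in measurable X]setTI.
exact: measurable_fun_ler mf mg measurableT [set true] I.
Qed.

Variables (mu : {measure set T -> \bar R}) (Y : T -> R).
Hypotheses (mY : measurable_fun setT Y) (Y0 : forall w, 0 <= Y w).

Let mYE : measurable_fun setT (fun w => (Y w)%:E).
Proof. exact/measurable_EFinP. Qed.

Lemma ge0_integral_le_cst {D : set T} {c : R} : measurable D ->
  (forall w, D w -> Y w <= c) ->
  (\int[mu]_(w in D) (Y w)%:E <= c%:E * mu D)%E.
Proof.
move=> mD Yc; rewrite -integral_cst //; apply: ge0_le_integral => //.
- by move=> w _; rewrite lee_fin.
- exact: measurable_funTS.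
Qed.

Lemma ge0_cst_le_integral {D : set T} {c : R} : measurable D -> 0 <= c ->
  (forall w, D w -> c <= Y w) ->
  (c%:E * mu D <= \int[mu]_(w in D) (Y w)%:E)%E.
Proof.
move=> mD c0 cY; rewrite -integral_cst //; apply: ge0_le_integral => //.
exact: measurable_funTS.
Qed.

Lemma ge0_integral_setDI {B C : set T} : measurable B -> measurable C ->
  (\int[mu]_(w in B) (Y w)%:E
   = \int[mu]_(w in B `\` C) (Y w)%:E + \int[mu]_(w in B `&` C) (Y w)%:E)%E.
Proof.
move=> mB mC; rewrite -ge0_integral_setU //.
- by rewrite setUC setUIDK.
- exact: measurableD.
- exact: measurableI.
- exact: measurable_funTS.
- by move=> w _; rewrite lee_fin.
- by rewrite setDE disj_set2E setIACA setICl setI0.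
Qed.

(* The integrated form of the pointwise inequality (Y - q) (1_C - 1_B) >= 0. *)
Lemma ge0_integral_exchange (q : R) (B C : set T) :
  measurable B -> measurable C -> 0 <= q ->
  (forall w, (B `\` C) w -> Y w <= q) -> (forall w, (C `\` B) w -> q <= Y w) ->
  (\int[mu]_(w in B) (Y w)%:E + q%:E * mu C
   <= \int[mu]_(w in C) (Y w)%:E + q%:E * mu B)%E.
Proof.
move=> mB mC q0 BCq CBq.
have BC := ge0_integral_le_cst (measurableD mB mC) BCq.
have CB := ge0_cst_le_integral (measurableD mC mB) q0 CBq.
rewrite (ge0_integral_setDI mB mC) (ge0_integral_setDI mC mB).
rewrite (measureDI mu mB mC) (measureDI mu mC mB) setIC.
rewrite !ge0_muleDr ?measure_ge0 // addeACA [leRHS]addeACA.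
by apply: leeD => //; rewrite addeC; exact: leeD.
Qed.

End integral_bounds.

Section conditional_means.
Context d (T : measurableType d) (R : realType) (P : probability T R).

Definition cond_exp_le (Z : T -> R) (c : R) : \bar R :=
  let A := [set w | Z w <= c] in
  ((\int[P]_(w in A) (Z w)%:E) * ((fine (P A))^-1)%:E)%E.

Lemma probability_EFin (A : set T) : measurable A -> exists p : R, P A = p%:E.
Proof. by exists (fine (P A)); rewrite fineK ?fin_num_measure. Qed.

Variable Y : T -> R.
Hypotheses (mY : measurable_fun setT Y) (Y0 : forall w, 0 <= Y w).

Let int_ge0 (A : set T) : (0 <= \int[P]_(w in A) (Y w)%:E)%E.
Proof. by apply: integral_ge0 => w _; rewrite lee_fin. Qed.

Lemma cond_exp_ge_ge0 (c : R) : (0 <= cond_exp_ge P Y c)%E.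
Proof. by apply: mule_ge0 => //; rewrite lee_fin invr_ge0 fine_ge0. Qed.

Lemma cond_exp_le_ge0 (c : R) : (0 <= cond_exp_le Y c)%E.
Proof. by apply: mule_ge0 => //; rewrite lee_fin invr_ge0 fine_ge0. Qed.

Lemma cond_exp_geN (c : R) :
  cond_exp_ge P (fun w => - Y w) (- c) = (- cond_exp_le Y c)%E.
Proof.
rewrite /cond_exp_ge /cond_exp_le /=.
have -> : [set w | - c <= - Y w] = [set w | Y w <= c].
  by apply/seteqP; split => w /=; rewrite lerN2.
under eq_integral do rewrite EFinN.
by rewrite integral_ge0N ?mulNe // => w _; rewrite lee_fin.
Qed.

Lemma integral_le_cond_exp_ge (q : R) (B : set T) : 0 <= q -> measurable B ->
  (0 < P [set w | (q <= Y w)%R])%E -> (P [set w | (q <= Y w)%R] <= P B)%E ->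
  (\int[P]_(w in B) (Y w)%:E <= P B * cond_exp_ge P Y q)%E.
Proof.
move=> q0 mB; set C := [set w | q <= Y w] => PC0 PCB.
have mC : measurable C by apply: measurable_ler_set.
have exch : (\int[P]_(w in B) (Y w)%:E + q%:E * P C
             <= \int[P]_(w in C) (Y w)%:E + q%:E * P B)%E.
  apply: ge0_integral_exchange => //; last by move=> w [].
  by move=> w [_ /negP]; rewrite -ltNge => /ltW.
have tail : (q%:E * P C <= \int[P]_(w in C) (Y w)%:E)%E.
  exact: ge0_cst_le_integral.
rewrite /cond_exp_ge -/C.
have [b Pb] := probability_EFin mB.
have [c Pc] := probability_EFin mC.
rewrite Pb Pc lte_fin lee_fin in PC0 PCB *; rewrite Pb Pc in exch tail.
case iC : (\int[P]_(w in C) (Y w)%:E)%E => [u| |] /=; last first.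
- by have := int_ge0 C; rewrite iC.
- by rewrite mulyr gtr0_sg ?invr_gt0 // mul1e mulry gtr0_sg ?mul1e ?leey //; lra.
rewrite iC -!EFinM -EFinD in exch tail; rewrite lee_fin in tail.
have [x iB] : exists x, (\int[P]_(w in B) (Y w)%:E)%E = x%:E.
  exists (fine (\int[P]_(w in B) (Y w)%:E)%E); rewrite fineK // ge0_fin_numE //.
  apply: le_lt_trans (ltry (u + q * b)); apply: le_trans exch.
  by rewrite leeDl // lee_fin mulr_ge0 // ltW.
rewrite iB -EFinD lee_fin in exch; rewrite iB -!EFinM lee_fin mulrA ler_pdivlMr //.
(* exch and tail give x <= u + q (b - c) <= u + (u / c) (b - c) = b u / c. *)
have : 0 <= (u - q * c) * (b - c) by apply: mulr_ge0; lra.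
have : 0 <= c * (u + q * b - x - q * c) by apply: mulr_ge0; lra.
nra.
Qed.

Lemma cond_exp_le_le_integral (q : R) (A : set T) : 0 <= q -> measurable A ->
  (0 < P [set w | (Y w <= q)%R])%E -> (P [set w | (Y w <= q)%R] <= P A)%E ->
  (P A * cond_exp_le Y q <= \int[P]_(w in A) (Y w)%:E)%E.
Proof.
move=> q0 mA; set D := [set w | Y w <= q] => PD0 PDA.
have mD : measurable D by apply: measurable_ler_set.
have exch : (\int[P]_(w in D) (Y w)%:E + q%:E * P A
             <= \int[P]_(w in A) (Y w)%:E + q%:E * P D)%E.
  apply: ge0_integral_exchange => //; first by move=> w [].
  by move=> w [_ /negP]; rewrite -ltNge => /ltW.
have body : (\int[P]_(w in D) (Y w)%:E <= q%:E * P D)%E.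
  exact: ge0_integral_le_cst.
rewrite /cond_exp_le -/D.
have [a Pa] := probability_EFin mA.
have [p Pd] := probability_EFin mD.
rewrite Pa Pd lte_fin lee_fin in PD0 PDA *; rewrite Pa Pd in exch body.
have [v iD] : exists v, (\int[P]_(w in D) (Y w)%:E)%E = v%:E.
  exists (fine (\int[P]_(w in D) (Y w)%:E)%E); rewrite fineK // ge0_fin_numE //.
  exact: le_lt_trans body (ltry _).
case iA : (\int[P]_(w in A) (Y w)%:E)%E => [x| |] /=; last 2 first.
- exact: leey.
- by have := int_ge0 A; rewrite iA.
rewrite iD -EFinM lee_fin in body.
rewrite iA iD -!EFinM -!EFinD lee_fin in exch.
rewrite iD -!EFinM lee_fin mulrA ler_pdivrMr //.
(* exch and body give x >= v + q (a - p) >= v + (v / p) (a - p) = a v / p. *)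
have : 0 <= (q * p - v) * (a - p) by apply: mulr_ge0; lra.
have : 0 <= p * (x + q * p - v - q * a) by apply: mulr_ge0; lra.
nra.
Qed.

End conditional_means.

Section quantile.
Context d (T : measurableType d) (R : realType) (P : probability T R).

Lemma nondecreasing_bigcup_measure_le (mu : {measure set T -> \bar R})
    (F : (set T)^nat) (c : \bar R) :
  (forall k, measurable (F k)) -> {homo F : k m / (k <= m)%N >-> (k <= m)%O} ->
  (forall k, (mu (F k) <= c)%E) -> (mu (\bigcup_k F k) <= c)%E.
Proof.
move=> mF homF Fc.
have mUF : measurable (\bigcup_k F k) by exact: bigcup_measurable.
have cvgF := @nondecreasing_cvg_mu _ _ _ mu _ mF mUF homF.
rewrite -(cvg_lim _ cvgF) //; apply: lime_le; last exact: nearW.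
by apply/cvg_ex; eexists; exact: cvgF.
Qed.

Lemma exists_prob_lt_ge {S : T -> R} {e : R} : measurable_fun setT S -> e < 1 ->
  exists N : R, (e%:E <= P [set w | (S w < N)%R])%E.
Proof.
move=> mS e1; apply: contrapT => /forallNP noN.
have : (P [set: T] <= e%:E)%E.
  have -> : [set: T] = \bigcup_k [set w | S w < k%:R].
    apply/seteqP; split => // w _; exists (Num.truncn (S w)).+1 => //=.
    exact: truncnS_gt.
  apply: nondecreasing_bigcup_measure_le => [k|k m km|k].
  - by apply: measurable_ltr_set => //; exact: measurable_cst.
  - by apply/subsetPset => w /= /lt_le_trans; apply; rewrite ler_nat.
  - by apply/ltW; rewrite ltNge; apply/negP; exact: noN.
by rewrite probability_setT lee_fin leNgt e1.
Qed.

Lemma cdfE (Y : {RV P >-> R}) (x : R) : cdf Y x = P [set w | Y w <= x].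
Proof. by congr (P _); apply/seteqP; split => w /=; rewrite in_itv. Qed.

Section quantile_level.
Variables (Y : {RV P >-> R}) (e : R).
Hypotheses (Y0 : forall w, 0 <= Y w) (e0 : 0 < e) (e1 : e < 1).

Let levels := [set x | (e%:E <= cdf Y x)%E].

Let levels_ge0 : lbound levels 0.
Proof.
move=> x; rewrite /levels /= cdfE => ex; rewrite leNgt; apply/negP => x0.
have Yx0 : [set w | Y w <= x] = set0.
  by apply/seteqP; split => // w /= Yx; have := le_trans (Y0 w) Yx; rewrite leNgt x0.
by move: ex; rewrite Yx0 measure0 lee_fin leNgt e0.
Qed.

Let levels_neq0 : levels !=set0.
Proof.
have [N PN] := exists_prob_lt_ge (measurable_funPT Y) e1.
exists N; rewrite /levels /= cdfE; apply: le_trans PN _.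
apply: le_measure; rewrite ?inE; last by move=> w /ltW.
- by apply: measurable_ltr_set => //; exact: measurable_cst.
- by apply: measurable_ler_set => //; exact: measurable_cst.
Qed.

Lemma quantile_ge0 : 0 <= quantile Y e.
Proof. exact: lb_le_inf levels_neq0 levels_ge0. Qed.

Lemma cdf_lt_quantile (x : R) : x < quantile Y e -> (cdf Y x < e%:E)%E.
Proof.
move=> xq; rewrite ltNge; apply/negP => ex.
have := lt_le_trans xq (ge_inf (ex_intro _ 0 levels_ge0) ex).
by rewrite ltxx.
Qed.

Lemma cdf_quantile_ge : (e%:E <= cdf Y (quantile Y e))%E.
Proof.
set q := quantile Y e.
have cdf_q := @cdf_right_continuous _ _ _ P Y q.
rewrite -(cvg_lim _ cdf_q) //; apply: lime_ge.
  by apply/cvg_ex; eexists; exact: cdf_q.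
near=> y; have qy : q < y by near: y; exact: nbhs_right_gt.
have [z lz zy] := inf_lt levels_neq0 qy.
exact: le_trans lz (cdf_nondecreasing Y (ltW zy)).
Unshelve. all: by end_near.
Qed.

Lemma prob_lt_quantile_le : (P [set w | (Y w < quantile Y e)%R] <= e%:E)%E.
Proof.
set q := quantile Y e.
have -> : [set w | Y w < q] = \bigcup_k [set w | Y w <= q - k.+1%:R^-1].
  apply/seteqP; split => [w /= /ltr_add_invr [k Yk]|w [k _ /= Yk]].
    by exists k => //=; rewrite lerBrDr ltW.
  by apply: le_lt_trans Yk _; rewrite ltrBlDr ltrDl invr_gt0.
apply: nondecreasing_bigcup_measure_le => [k|k m km|k].
- by apply: measurable_ler_set => //; exact: measurable_cst.
- apply/subsetPset => w /= /le_trans; apply.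
  by rewrite lerD2l lerN2 lef_pV2 ?posrE // ler_nat.
- have qk : q - k.+1%:R^-1 < q by rewrite ltrBlDr ltrDl invr_gt0.
  by have /ltW := cdf_lt_quantile qk; rewrite cdfE.
Qed.

End quantile_level.

Lemma density_atomless (Y : {RV P >-> R}) (f : R -> R) :
  is_density Y f -> forall x, P [set w | Y w = x] = 0%E.
Proof.
by move=> [_ _ Pf] x; rewrite -[X in P X]/(Y @^-1` [set x]) Pf // integral_set1.
Qed.

Section atomless_quantile.
Variables (Y : {RV P >-> R}) (e : R).
Hypotheses (Y0 : forall w, 0 <= Y w) (e0 : 0 < e) (e1 : e < 1).
Hypothesis Y_atomless : forall x, P [set w | Y w = x] = 0%E.

Lemma prob_ler_ltr (x : R) : P [set w | Y w <= x] = P [set w | Y w < x].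
Proof.
have -> : [set w | Y w <= x] = [set w | Y w < x] `|` [set w | Y w = x].
  apply/seteqP; split => w /=; last by case=> [/ltW|->].
  by rewrite le_eqVlt => /orP[/eqP|]; [right|left].
rewrite measureU.
- by rewrite [X in (_ + X)%E](_ : _ = 0%E) ?adde0 //; exact: Y_atomless.
- by apply: measurable_ltr_set => //; exact: measurable_cst.
- exact: (measurable_funPTI _ (measurable_set1 x)).
- by apply/seteqP; split => // w [/=]; move=> + Yx; rewrite Yx ltxx.
Qed.

Lemma prob_quantile_le : P [set w | Y w <= quantile Y e] = e%:E.
Proof.
apply/le_anti/andP; split; first by rewrite prob_ler_ltr; exact: prob_lt_quantile_le.
by rewrite -cdfE; exact: cdf_quantile_ge.
Qed.

Lemma prob_quantile_ge : P [set w | quantile Y e <= Y w] = (1 - e)%:E.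
Proof.
have -> : [set w | quantile Y e <= Y w] = ~` [set w | Y w < quantile Y e].
  by apply/seteqP; split => w /=; rewrite leNgt => /negP.
rewrite probability_setC -?prob_ler_ltr ?prob_quantile_le ?EFinB //.
by apply: measurable_ltr_set => //; exact: measurable_cst.
Qed.

End atomless_quantile.
End quantile.

Section threshold_bounds.
Context d (T : measurableType d) (R : realType) (P : probability T R).
Variables (n : nat) (X : 'I_n -> {RV P >-> R}) (eps : R).
Hypotheses (X0 : forall i w, 0 <= X i w) (eps0 : 0 < eps) (eps1 : eps < 1).
Hypothesis X_atomless : forall i x, P [set w | X i w = x] = 0%E.

Lemma Phi_minusE :
  Phi_minus X (1 - eps)
  = (- \sum_(i < n) cond_exp_le P (X i) (quantile (X i) eps))%E.
Proof.
rewrite /Phi_minus subKr -sumeN; last first.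
  by move=> i j _ _; apply: ge0_adde_def; rewrite inE cond_exp_le_ge0.
by apply: eq_bigr => i _; exact: cond_exp_geN.
Qed.

Let mS : measurable_fun setT (fun w => \sum_(i < n) X i w).
Proof. exact: measurable_sum. Qed.

Let S0 w : 0 <= \sum_(i < n) X i w.
Proof. exact: sumr_ge0. Qed.

Let integral_sum (A : set T) : measurable A ->
  (\int[P]_(w in A) (\sum_(i < n) X i w)%:E
   = \sum_(i < n) \int[P]_(w in A) (X i w)%:E)%E.
Proof.
move=> mA; under eq_integral do rewrite -sumEFin.
apply: ge0_integral_sum => // i; last by move=> w _; rewrite lee_fin.
exact/measurable_EFinP/measurable_funTS.
Qed.

Lemma le_Phi (t : R) : 0 <= t ->
  (P [set w | (\sum_(i < n) X i w < t)%R] < eps%:E)%E -> (t%:E <= Phi X eps)%E.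
Proof.
move=> t0 PSt.
have mSt : measurable [set w | (\sum_(i < n) X i w < t)%R].
  by apply: measurable_ltr_set => //; exact: measurable_cst.
set B := [set w | t <= \sum_(i < n) X i w].
have mB : measurable B by apply: measurable_ler_set => //; exact: measurable_cst.
have PB : P B = (1 - P [set w | (\sum_(i < n) X i w < t)%R])%E.
  rewrite -probability_setC //; congr (P _).
  by apply/seteqP; split => w; rewrite /B /= leNgt => /negP.
have [s Ps] := probability_EFin P mSt.
rewrite Ps lte_fin in PSt; rewrite Ps -EFinB in PB.
have PXB i : (P [set w | (quantile (X i) eps <= X i w)%R] <= P B)%E.
  by rewrite prob_quantile_ge // PB lee_fin; lra.
have PX0 i : (0 < P [set w | (quantile (X i) eps <= X i w)%R])%E.
  by rewrite prob_quantile_ge // lte_fin subr_gt0.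
have : (t%:E * P B <= P B * Phi X eps)%E.
  apply: le_trans (ge0_cst_le_integral P mS mB t0 (fun w Bw => Bw)) _.
  rewrite integral_sum // /Phi ge0_sume_distrr; last first.
    by move=> i _; exact: cond_exp_ge_ge0.
  apply: lee_sum => i _; apply: integral_le_cond_exp_ge => //.
  exact: quantile_ge0.
have PB0 : (0 < P B)%E by rewrite PB lte_fin subr_gt0 (lt_trans PSt eps1).
by move=> le; rewrite -(lee_pmul2l _ PB0) ?fin_num_measure // muleC.
Qed.

Lemma ge_sum_cond_exp_le (t : R) :
  (eps%:E <= P [set w | (\sum_(i < n) X i w < t)%R])%E ->
  (\sum_(i < n) cond_exp_le P (X i) (quantile (X i) eps) <= t%:E)%E.
Proof.
set A := [set w | (\sum_(i < n) X i w < t)%R] => PA.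
have mA : measurable A by apply: measurable_ltr_set => //; exact: measurable_cst.
have [a Pa] := probability_EFin P mA.
rewrite Pa lee_fin in PA.
have : (P A * \sum_(i < n) cond_exp_le P (X i) (quantile (X i) eps) <= t%:E * P A)%E.
  apply: le_trans (ge0_integral_le_cst P mS S0 mA (fun w Aw => ltW Aw)).
  rewrite integral_sum // ge0_sume_distrr; last first.
    by move=> i _; exact: cond_exp_le_ge0.
  apply: lee_sum => i _; apply: cond_exp_le_le_integral => //.
  - exact: quantile_ge0.
  - by rewrite prob_quantile_le // lte_fin.
  - by rewrite prob_quantile_le // Pa lee_fin.
have PA0 : (0 < P A)%E by rewrite Pa lte_fin (lt_le_trans eps0 PA).
by move=> le; rewrite -(lee_pmul2l _ PA0) ?fin_num_measure // [leRHS]muleC.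
Qed.

End threshold_bounds.

Section outage_capacity.
Context d (T : measurableType d) (R : realType) (P : probability T R).

Definition outage_rates (S : T -> R) (rho eps : R) : set R :=
  [set r | 0 <= r /\ (P [set w | (S w < (2 `^ r - 1) / rho)%R] < eps%:E)%E].

Lemma outage_capacityE (n : nat) (X : 'I_n -> {RV P >-> R}) (rho eps : R) :
  outage_capacity X rho eps
  = sup (outage_rates (fun w => \sum_(i < n) X i w) rho eps).
Proof. by []. Qed.

Variables (S : T -> R) (rho eps : R).
Hypotheses (mS : measurable_fun setT S) (S0 : forall w, 0 <= S w).
Hypotheses (rho0 : 0 < rho) (eps0 : 0 < eps) (eps1 : eps < 1).

Let rates := outage_rates S rho eps.

Let rates0 : rates 0.
Proof.
split => //; rewrite powRr0 subrr mul0r.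
have -> : [set w | S w < 0] = set0.
  by apply/seteqP; split => // w /=; rewrite ltNge S0.
by rewrite measure0 lte_fin.
Qed.

Let measurable_S_lt (t : R) : measurable [set w | S w < t].
Proof. by apply: measurable_ltr_set => //; exact: measurable_cst. Qed.

Lemma sup_outage_rates_le (U : \bar R) : (0 <= U)%E ->
  (forall t, 0 <= t -> (P [set w | (S w < t)%R] < eps%:E)%E -> (t%:E <= U)%E) ->
  ((sup rates)%:E <= elog2 (1 + rho%:E * U))%E.
Proof.
case: U => [u| |] // u0 Ubound; last first.
  by rewrite mulry gtr0_sg // mul1e addey // leey.
rewrite -EFinM -EFinD lee_fin /=; rewrite lee_fin in u0.
have pos : 0 < 1 + rho * u by have := mulr_ge0 (ltW rho0) u0; lra.
apply: ge_sup; first by exists 0.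
move=> r [r0 Pr]; rewrite le_log2 //.
have r_ge1 : 1 <= 2 `^ r by rewrite -[leLHS](powRr0 2); apply: ler_powR => //; lra.
have thr0 : 0 <= (2 `^ r - 1) / rho by rewrite divr_ge0 ?subr_ge0 // ltW.
have := Ubound _ thr0 Pr; rewrite lee_fin ler_pdivrMr //.
nra.
Qed.

Lemma sup_outage_rates_ge (L : \bar R) : (0 <= L)%E ->
  (forall t, (eps%:E <= P [set w | (S w < t)%R])%E -> (L <= t%:E)%E) ->
  (elog2 (1 + rho%:E * L) <= (sup rates)%:E)%E.
Proof.
move=> L0 Lbound; have [N PN] := exists_prob_lt_ge P mS eps1.
have rates_lt r : rates r -> (2 `^ r - 1) / rho < N.
  move=> [_ Pr]; rewrite ltNge; apply/negP => Nr.
  have : (P [set w | (S w < N)%R] <= P [set w | (S w < (2 `^ r - 1) / rho)%R])%E.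
    by apply: le_measure; rewrite ?inE // => w /= /lt_le_trans; apply.
  by move=> /(le_trans PN) /(lt_le_trans Pr); rewrite ltxx.
have N0 : 0 < N by have := rates_lt 0 rates0; rewrite powRr0 subrr mul0r.
have has_sup_rates : has_sup rates.
  split; first by exists 0.
  exists (log2 (1 + rho * N)) => r /rates_lt thrN.
  rewrite le_log2; last by have := mulr_gt0 rho0 N0; lra.
  by move: thrN; rewrite ltr_pdivrMr // => ?; nra.
have sup0 : 0 <= sup rates := sup_upper_bound has_sup_rates rates0.
case: L L0 Lbound => [l| |] // l0 Lbound; last by have := Lbound N PN.
rewrite -EFinM -EFinD lee_fin /=; rewrite lee_fin in l0.
have pos : 0 < 1 + rho * l by have := mulr_ge0 (ltW rho0) l0; lra.
rewrite leNgt; apply/negP => sup_lt.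
pose r := (sup rates + log2 (1 + rho * l)) / 2.
have : rates r.
  split; first by rewrite /r; lra.
  rewrite ltNge; apply/negP => /Lbound; rewrite lee_fin => l_thr.
  have : r < log2 (1 + rho * l) by rewrite /r; lra.
  rewrite lt_log2 // => rl.
  by move: l_thr; rewrite ler_pdivlMr //; nra.
by move=> /(sup_upper_bound has_sup_rates); rewrite /r; lra.
Qed.

End outage_capacity.

Theorem theorem3 (d : measure_display) (T : measurableType d) (R : realType)
    (P : probability T R) (n : nat) (rho eps : R)
    (X : 'I_n -> {RV P >-> R}) (f : 'I_n -> R -> R) :
  (2 <= n)%N -> 0 < rho -> 0 < eps < 1 ->
  (forall i w, 0 <= X i w) ->
  (forall i, is_density (X i) (f i)) ->
  (forall i, monotone_density (f i)) ->
  (elog2 (1 - rho%:E * Phi_minus X (1 - eps)) <= (outage_capacity X rho eps)%:E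
   /\ (outage_capacity X rho eps)%:E <= elog2 (1 + rho%:E * Phi X eps))%E.
Proof.
move=> _ rho0 /andP[eps0 eps1] X0 X_density _.
have X_atomless i := density_atomless (X_density i).
have mS : measurable_fun setT (fun w => \sum_(i < n) X i w).
  by apply: measurable_sum => i; exact: measurable_funPT.
have S0 w : 0 <= \sum_(i < n) X i w by exact: sumr_ge0.
rewrite outage_capacityE Phi_minusE // muleN oppeK; split.
- apply: sup_outage_rates_ge => //; last exact: ge_sum_cond_exp_le.
  by apply: sume_ge0 => i _; exact: cond_exp_le_ge0.
- apply: sup_outage_rates_le => //; last exact: le_Phi.
  by apply: sume_ge0 => i _; exact: cond_exp_ge_ge0.
Qed.
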